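(* Let $A$, $S_1$, $S_2$, $Y$ be random variables and suppose: (i) there exist random variables $(S_1(a),U_2(a),S_2(u_2),Y(s_1,s_2,u_2): a,s_1,s_2,u_2)$ with $S_1=S_1(A)$, $S_2=S_2(U_2)$, $Y=Y(S_1,S_2,U_2)$, where $U_2:=U_2(A)$; (ii) there is a random variable $U_1$ such that for all $a,s_1,s_2,u_2$: $(U_1,Y(s_1,s_2,u_2),S_1(a))\perp(U_2(a),S_2(u_2))$, $Y(s_1,s_2,u_2)\perp S_1(a)\mid U_1$, and $U_2(a)\perp S_2(u_2)$; (iii) $A\perp(U_1,U_2(a),S_1(a),S_2(u_2),Y(s_1,s_2,u_2): a,s_1,s_2,u_2)$. Then $(U_2,S_1)\perp S_2(u_2)$ for every $u_2$.
   Context: $\perp$ denotes statistical independence; $A$ is a randomized treatment (cell assignment), $S_1,S_2$ short-term metrics, $Y$ a long-term outcome, $U_1,U_2$ unobserved variables. *)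

From HB Require Import structures.
From mathcomp Require Import all_boot all_order all_algebra.
From mathcomp Require Import all_classical all_reals all_analysis.
Set Implicit Arguments. Unset Strict Implicit. Unset Printing Implicit Defensive.
Import Order.TTheory GRing.Theory Num.Theory.
Local Open Scope classical_set_scope.
Local Open Scope ring_scope.

Definition preim_sets {d} {Omega : Type} {T : measurableType d} (X : Omega -> T)
  : set (set Omega) := [set X @^-1` B | B in measurable].

Definition preim_sets_fin {Omega : Type} {T : finType} (X : Omega -> T)
  : set (set Omega) := [set X @^-1` B | B in [set: set T]].

(* Independence of (joint) random vectors / families is expressed by taking
   for each side the union of the preimage classes of the components. *)
Definition indep_gen {d} {Omega : measurableType d} {R : realType}
  (P : probability Omega R) (F G : set (set Omega)) : Prop :=
  forall E E', <<s F >> E -> <<s G >> E' ->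
    P (E `&` E') = (P E * P E')%E.

(* Conditional independence of sigma<<F>> and sigma<<G>> given the random
   variable Z: for every event E of sigma<<F>> there is a version g(Z) of
   P(E | Z) (g measurable, g(Z) integrable) which is also a version of
   P(E | sigma<<G>> \/ sigma(Z)), i.e.
     P(E /\ E' /\ Z in D) = \int_{E' /\ Z in D} g(Z) dP
   for all E' in sigma<<G>> and measurable D (it suffices to test on this
   pi-system generating sigma<<G>> \/ sigma(Z)). *)
Definition cond_indep_gen {d} {Omega : measurableType d} {R : realType}
  (P : probability Omega R) (F G : set (set Omega))
  {dz} {TZ : measurableType dz} (Z : Omega -> TZ) : Prop :=
  forall E, <<s F >> E ->
    exists g : TZ -> R,
      [/\ measurable_fun setT g,
          P.-integrable setT (EFin \o (g \o Z)) &
          forall E' D, <<s G >> E' -> measurable D ->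
            P (E `&` E' `&` Z @^-1` D) =
            (\int[P]_(w in E' `&` Z @^-1` D) (g (Z w))%:E)%E].

From HB Require Import structures.
From mathcomp Require Import all_boot all_order all_algebra.
From mathcomp Require Import all_classical all_reals all_analysis.
Local Open Scope classical_set_scope.
Local Open Scope ring_scope.

(* On the event {A = a}, U2 and S1 coincide with U2(a) and S1(a), and by (iii)
   this event is independent of every event built from U2(a), S1(a), S2(u2).
   By (ii), S1(a) is independent of (U2(a), S2(u2)) and U2(a) of S2(u2), hence
   (U2(a), S1(a)) is independent of S2(u2); summing over the finitely many
   values a gives the product rule for {U2 in B, S1 in C, S2(u2) in D}.  These
   rectangles form a pi-system generating sigma(U2, S1), and Dynkin's pi-lambda
   theorem concludes. *)

Lemma preimage_measurable d d' (T : measurableType d) (T' : measurableType d')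
    (f : T -> T') (B : set T') :
  measurable_fun setT f -> measurable B -> measurable (f @^-1` B).
Proof. by move=> mf mB; rewrite -[_ @^-1` _]setTI; exact: mf. Qed.

Lemma g_sigma_setI {T : pointedType} {F : set (set T)} {E E' : set T} :
  <<s F >> E -> <<s F >> E' -> <<s F >> (E `&` E').
Proof. exact: (@measurableI _ (g_sigma_algebraType F)). Qed.

Section selection.
Variables (T : Type) (I : finType) (A : T -> I).

Lemma select_setE (E : I -> set T) :
  [set w | E (A w) w] = \bigcup_(i in [set: I]) (A @^-1` [set i] `&` E i).
Proof.
apply/seteqP; split=> [w Ew|w [i _ [/= <-]]] //.
by exists (A w).
Qed.

End selection.

Section measurable_selection.
Context {d} {T : measurableType d} {I : finType} {A : T -> I}.
Hypothesis mA : forall i, measurable (A @^-1` [set i]).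

Lemma measurable_select_set (E : I -> set T) :
  (forall i, measurable (E i)) -> measurable [set w | E (A w) w].
Proof.
move=> mE; rewrite select_setE; apply: fin_bigcup_measurable.
  exact: finite_finset.
by move=> i _; apply: measurableI.
Qed.

Lemma measurable_fun_select d' (T' : measurableType d') (X : I -> T -> T') :
  (forall i, measurable_fun setT (X i)) ->
  measurable_fun setT (fun w => X (A w) w).
Proof.
move=> mX _ B mB; rewrite setTI.
apply: (measurable_select_set (fun i => X i @^-1` B)) => i.
exact: preimage_measurable.
Qed.

Lemma measure_select_set {R : realType} (mu : {measure set T -> \bar R})
    (E : I -> set T) :
  (forall i, measurable (E i)) ->
  mu [set w | E (A w) w] =
  (\sum_(i \in [set: I]) mu (A @^-1` [set i] `&` E i))%E.
Proof.
move=> mE; rewrite select_setE (measure_fin_bigcup mu) //.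
- exact: finite_finset.
- by move=> i j _ _ [w [[/= <- _] [/= <- _]]].
- by move=> i _; apply: measurableI.
Qed.

End measurable_selection.

Section independence.
Context {R : realType} {d} {Omega : measurableType d} (P : probability Omega R).
Local Open Scope ereal_scope.

Lemma probability_setI_g_sigma (F : set (set Omega)) (X : set Omega) :
  F `<=` measurable -> setI_closed F -> F setT -> measurable X ->
  (forall E, F E -> P (E `&` X) = P E * P X) ->
  forall E, <<s F >> E -> P (E `&` X) = P E * P X.
Proof.
move=> Fm FI FT mX FX E FE.
pose c : {nonneg R} := NngNum (fine_ge0 (measure_ge0 P X)).
have PXE : c%:num%:E = P X by rewrite fineK // fin_num_measure.
have coverT : \bigcup_(k : nat) setT = [set: Omega] by rewrite bigcup_const.
have agree E' : F E' -> mrestr P mX E' = mscale c P E'.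
  by move=> FE'; rewrite /mrestr /mscale PXE muleC FX.
have finT (k : nat) : mrestr P mX setT < +oo.
  by rewrite /mrestr setTI ltey_eq fin_num_measure.
apply: etrans (g_sigma_algebra_measure_unique F Fm (fun=> setT) (fun=> FT)
  coverT (mrestr P mX) (mscale c P) FI agree finT E FE) _.
by rewrite /= /mscale PXE muleC.
Qed.

Lemma indep_gen_pi_system (F G : set (set Omega)) :
  F `<=` measurable -> G `<=` measurable ->
  setI_closed F -> setI_closed G -> F setT -> G setT ->
  (forall E E', F E -> G E' -> P (E `&` E') = P E * P E') ->
  indep_gen P F G.
Proof.
move=> Fm Gm FI GI FT GT FG E E' FE GE'.
have mE : measurable E.
  exact: smallest_sub (@sigma_algebra_measurable _ Omega) Fm _ FE.
rewrite setIC muleC; apply: probability_setI_g_sigma GE' => // B GB.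
rewrite setIC muleC; apply: probability_setI_g_sigma FE => // [|A FA].
  exact: Gm.
exact: FG.
Qed.

Lemma indep_genS {F F' G G' : set (set Omega)} :
  F' `<=` F -> G' `<=` G -> indep_gen P F G -> indep_gen P F' G'.
Proof.
move=> F'F G'G FG E E' FE GE'.
by apply: FG; [exact: sub_sigma_algebra2 FE|exact: sub_sigma_algebra2 GE'].
Qed.

End independence.

Section selected_event.
Context {R : realType} {d} {Omega : measurableType d} (P : probability Omega R).
Context {I : finType} {A : Omega -> I}.
Hypothesis mA : forall i, measurable (A @^-1` [set i]).
Local Open Scope ereal_scope.

Lemma indep_select_set (E : I -> set Omega) (D : set Omega) :
  (forall i, measurable (E i)) -> measurable D ->
  (forall i, P (A @^-1` [set i] `&` E i) = P (A @^-1` [set i]) * P (E i)) ->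
  (forall i, P (A @^-1` [set i] `&` (E i `&` D)) =
             P (A @^-1` [set i]) * P (E i `&` D)) ->
  (forall i, P (E i `&` D) = P (E i) * P D) ->
  P ([set w | E (A w) w] `&` D) = P [set w | E (A w) w] * P D.
Proof.
move=> mE mD AE AED ED.
rewrite (measure_select_set mA P (fun i => E i `&` D)); last first.
  by move=> i; apply: measurableI.
rewrite (measure_select_set mA P E) // ge0_mule_fsuml; last first.
  by move=> i; apply: measure_ge0; apply: measurableI.
by apply: eq_fsbigr => i _; rewrite /= AED ED AE muleA.
Qed.

End selected_event.

Section preimage_classes.
Context {d} {Omega : measurableType d} {d1} {T1 : measurableType d1}
  {d2} {T2 : measurableType d2}.

Definition preim_rects (X : Omega -> T1) (Y : Omega -> T2) : set (set Omega) :=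
  [set X @^-1` B `&` Y @^-1` C | B in measurable & C in measurable].

Lemma preim_sets_setI_closed (X : Omega -> T1) : setI_closed (preim_sets X).
Proof.
move=> _ _ [B mB <-] [C mC <-].
by exists (B `&` C); [exact: measurableI|rewrite preimage_setI].
Qed.

Lemma preim_setsT (X : Omega -> T1) : preim_sets X setT.
Proof. by exists setT. Qed.

Lemma preim_sets_measurable (X : Omega -> T1) :
  measurable_fun setT X -> preim_sets X `<=` measurable.
Proof. by move=> mX _ [B mB <-]; exact: preimage_measurable. Qed.

Lemma preim_rects_setI_closed (X : Omega -> T1) (Y : Omega -> T2) :
  setI_closed (preim_rects X Y).
Proof.
move=> _ _ [B mB [C mC <-]] [B' mB' [C' mC' <-]].
exists (B `&` B'); first exact: measurableI.
exists (C `&` C'); first exact: measurableI.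
by rewrite !preimage_setI setIACA.
Qed.

Lemma preim_rectsT (X : Omega -> T1) (Y : Omega -> T2) : preim_rects X Y setT.
Proof. by exists setT => //; exists setT => //; rewrite setIT. Qed.

Lemma preim_rects_measurable (X : Omega -> T1) (Y : Omega -> T2) :
  measurable_fun setT X -> measurable_fun setT Y ->
  preim_rects X Y `<=` measurable.
Proof.
move=> mX mY _ [B mB [C mC <-]].
by apply: measurableI; exact: preimage_measurable.
Qed.

Lemma preim_sets_sub_rects (X : Omega -> T1) (Y : Omega -> T2) :
  preim_sets X `|` preim_sets Y `<=` preim_rects X Y.
Proof.
move=> _ [[B mB <-]|[C mC <-]].
  by exists B => //; exists setT => //; rewrite preimage_setT setIT.
by exists setT => //; exists C => //; rewrite preimage_setT setTI.
Qed.

End preimage_classes.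

Section selected_potential_outcomes.
Context (R : realType) d (Omega : measurableType d) (P : probability Omega R).
Context (TA : finType) d1 (T1 : measurableType d1) d2 (T2 : measurableType d2)
  du (TU : measurableType du).
Variables (A : Omega -> TA) (S1 : TA -> Omega -> T1) (U2 : TA -> Omega -> TU)
  (S2 : Omega -> T2).
Hypothesis mA : forall a, measurable (A @^-1` [set a]).
Hypothesis mS1 : forall a, measurable_fun setT (S1 a).
Hypothesis mU2 : forall a, measurable_fun setT (U2 a).
Hypothesis mS2 : measurable_fun setT S2.
Hypothesis indep_A : forall a, indep_gen P (preim_sets_fin A)
  (preim_sets (U2 a) `|` preim_sets (S1 a) `|` preim_sets S2).
Hypothesis indep_S1 : forall a,
  indep_gen P (preim_sets (S1 a)) (preim_sets (U2 a) `|` preim_sets S2).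
Hypothesis indep_U2 : forall a, indep_gen P (preim_sets (U2 a)) (preim_sets S2).
Local Open Scope ereal_scope.

Lemma U2_S1_events_indep_S2 (a : TA) (E1 E2 E3 : set Omega) :
  preim_sets (U2 a) E1 -> preim_sets (S1 a) E2 -> preim_sets S2 E3 ->
  P (E1 `&` E2 `&` E3) = P (E1 `&` E2) * P E3.
Proof.
move=> hE1 hE2 hE3.
have sE1 : <<s preim_sets (U2 a) `|` preim_sets S2 >> E1.
  by apply: sub_sigma_algebra; left.
have sE3 : <<s preim_sets (U2 a) `|` preim_sets S2 >> E3.
  by apply: sub_sigma_algebra; right.
have sE2 : <<s preim_sets (S1 a) >> E2 by exact: sub_sigma_algebra.
rewrite [E1 `&` E2]setIC -setIA (indep_S1 a _ _ sE2 (g_sigma_setI sE1 sE3)).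
rewrite (indep_U2 a _ _ (sub_sigma_algebra hE1) (sub_sigma_algebra hE3)).
by rewrite (indep_S1 a _ _ sE2 sE1) muleA.
Qed.

Lemma indep_selected_pair :
  indep_gen P
    (preim_sets (fun w => U2 (A w) w) `|` preim_sets (fun w => S1 (A w) w))
    (preim_sets S2).
Proof.
apply: (indep_genS P (preim_sets_sub_rects _ _) (@subset_refl _ _)).
apply: (indep_gen_pi_system P).
- by apply: preim_rects_measurable; exact: measurable_fun_select.
- exact: preim_sets_measurable.
- exact: preim_rects_setI_closed.
- exact: preim_sets_setI_closed.
- exact: preim_rectsT.
- exact: preim_setsT.
move=> _ _ [B mB [C mC <-]] [D mD <-].
have mE a : measurable (U2 a @^-1` B `&` S1 a @^-1` C).
  by apply: measurableI; exact: preimage_measurable.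
pose G a := preim_sets (U2 a) `|` preim_sets (S1 a) `|` preim_sets S2.
have fiber a E : <<s G a >> E ->
    P (A @^-1` [set a] `&` E) = P (A @^-1` [set a]) * P E.
  by apply: indep_A; apply: sub_sigma_algebra; exists [set a].
have sU a : <<s G a >> (U2 a @^-1` B).
  by apply: sub_sigma_algebra; left; left; exists B.
have sS a : <<s G a >> (S1 a @^-1` C).
  by apply: sub_sigma_algebra; left; right; exists C.
have sD a : <<s G a >> (S2 @^-1` D).
  by apply: sub_sigma_algebra; right; exists D.
apply: (indep_select_set P mA (fun a => U2 a @^-1` B `&` S1 a @^-1` C)
  (S2 @^-1` D)) => //.
- exact: preimage_measurable.
- by move=> a; apply: fiber; apply: g_sigma_setI.
- by move=> a; apply: fiber; do 2?apply: g_sigma_setI.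
- by move=> a; apply: U2_S1_events_indep_S2; [exists B|exists C|exists D].
Qed.

End selected_potential_outcomes.

Theorem lemma1
  (R : realType) (d : measure_display) (Omega : measurableType d)
  (P : probability Omega R)
  (TA : finType)
  (d1 : measure_display) (T1 : measurableType d1)
  (d2 : measure_display) (T2 : measurableType d2)
  (dy : measure_display) (TY : measurableType dy)
  (du1 : measure_display) (TU1 : measurableType du1)
  (du2 : measure_display) (TU2 : measurableType du2)
  (* observed variables *)
  (A : Omega -> TA) (S1 : Omega -> T1) (S2 : Omega -> T2) (Y : Omega -> TY)
  (* potential outcomes / latent variables *)
  (S1p : TA -> Omega -> T1) (U2p : TA -> Omega -> TU2)
  (S2p : TU2 -> Omega -> T2) (Yp : T1 -> T2 -> TU2 -> Omega -> TY)
  (U1 : Omega -> TU1)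
  (* all of them are random variables *)
  (mA : forall a, measurable (A @^-1` [set a]))
  (mS1 : measurable_fun setT S1) (mS2 : measurable_fun setT S2)
  (mY : measurable_fun setT Y)
  (mS1p : forall a, measurable_fun setT (S1p a))
  (mU2p : forall a, measurable_fun setT (U2p a))
  (mS2p : forall u2, measurable_fun setT (S2p u2))
  (mYp : forall s1 s2 u2, measurable_fun setT (Yp s1 s2 u2))
  (mU1 : measurable_fun setT U1)
  (* (i) consistency, with U2 := U2(A) *)
  (hS1 : S1 = fun w => S1p (A w) w)
  (hS2 : S2 = fun w => S2p (U2p (A w) w) w)
  (hY : Y = fun w => Yp (S1 w) (S2 w) (U2p (A w) w) w)
  (* (ii) *)
  (h2a : forall a s1 s2 u2,
     indep_gen P
       (preim_sets U1 `|` preim_sets (Yp s1 s2 u2) `|` preim_sets (S1p a))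
       (preim_sets (U2p a) `|` preim_sets (S2p u2)))
  (h2b : forall a s1 s2 u2,
     cond_indep_gen P (preim_sets (Yp s1 s2 u2)) (preim_sets (S1p a)) U1)
  (h2c : forall a u2,
     indep_gen P (preim_sets (U2p a)) (preim_sets (S2p u2)))
  (* (iii) A independent of the whole family *)
  (h3 : indep_gen P (preim_sets_fin A)
     ([set E | (exists a, preim_sets (U2p a) E) \/ (exists a, preim_sets (S1p a) E)
              \/ (exists u2, preim_sets (S2p u2) E)
              \/ (exists s1 s2 u2, preim_sets (Yp s1 s2 u2) E)]
      `|` preim_sets U1)) :
  forall u2,
    indep_gen P
      (preim_sets (fun w => U2p (A w) w) `|` preim_sets S1)
      (preim_sets (S2p u2)).
Proof.
move=> u2; rewrite hS1.
apply: indep_selected_pair => // a.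
- apply: (indep_genS P _ _ h3) => // E [[UE|SE]|DE]; left.
  + by left; exists a.
  + by right; left; exists a.
  + by right; right; left; exists u2.
- by apply: (indep_genS P _ _ (h2a a point point u2)) => // E hE; right.
Qed.
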